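(* Let $M=(\mathbf{K}^{\mathbf{n}},\rho)$ be a sum-matroid with nullity function $\eta(\mathcal{L})=\mathrm{Rk}(\mathcal{L})-\rho(\mathcal{L})$. Then for every $i\in\{1,\dots,\eta(\mathbf{K}^{\mathbf{n}})\}$, $$\min\{\mathrm{Rk}(\mathcal{L}):\mathcal{L}\in\mathcal{P}(\mathbf{K}^{\mathbf{n}}),\ \eta(\mathcal{L})=i\}=\min\{\mathrm{Rk}(\mathcal{L}):\mathcal{L}\in\mathcal{P}(\mathbf{K}^{\mathbf{n}}),\ \eta(\mathcal{L})\ge i\}.$$
   Context: $\ell,n_1,\dots,n_\ell$ positive integers, $K_1,\dots,K_\ell$ finite fields. $\mathcal{P}(\mathbf{K}^{\mathbf{n}})=\mathcal{P}(K_1^{n_1})\times\cdots\times\mathcal{P}(K_\ell^{n_\ell})$, $\mathcal{P}(K_i^{n_i})$ the lattice of $K_i$-subspaces of $K_i^{n_i}$, with componentwise inclusion, sum $+$ and intersection $\cap$; $\mathrm{Rk}(\mathcal{L})=\sum_i\dim_{K_i}\mathcal{L}_i$; $\mathbf{K}^{\mathbf{n}}=(K_1^{n_1},\dots,K_\ell^{n_\ell})$. A sum-matroid is a pair $(\mathbf{K}^{\mathbf{n}},\rho)$ with $\rho:\mathcal{P}(\mathbf{K}^{\mathbf{n}})\to\mathbb{Z}_{\ge0}$ satisfying for all $\mathcal{L},\mathcal{L}'$: (R1) $0\le\rho(\mathcal{L})\le\mathrm{Rk}(\mathcal{L})$; (R2) $\mathcal{L}\subseteq\mathcal{L}'\Rightarrow\rho(\mathcal{L})\le\rho(\mathcal{L}')$;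 (R3) $\rho(\mathcal{L}+\mathcal{L}')+\rho(\mathcal{L}\cap\mathcal{L}')\le\rho(\mathcal{L})+\rho(\mathcal{L}')$. *)

From HB Require Import structures.
From mathcomp Require Import all_boot all_order all_algebra all_field.
Set Implicit Arguments. Unset Strict Implicit. Unset Printing Implicit Defensive.
Import GRing.Theory.
Local Open Scope ring_scope.

(* The lattice P(K^n) = P(K_1^{n_1}) x ... x P(K_l^{n_l}),
   indexed by i : 'I_l, with K i a finite field and n i a dimension. *)
Definition SumSp (l : nat) (K : 'I_l -> finFieldType) (n : 'I_l -> nat) :=
  forall i : 'I_l, {vspace 'rV[K i]_(n i)}.

Section SumSpOps.
Variables (l : nat) (K : 'I_l -> finFieldType) (n : 'I_l -> nat).

Definition sfull : SumSp K n := fun i => fullv.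
Definition ssub (L L' : SumSp K n) : Prop := forall i, (L i <= L' i)%VS.
Definition sadd (L L' : SumSp K n) : SumSp K n := fun i => (L i + L' i)%VS.
Definition scap (L L' : SumSp K n) : SumSp K n := fun i => (L i :&: L' i)%VS.
Definition Rk (L : SumSp K n) : nat := (\sum_(i < l) \dim (L i))%N.

Definition is_sum_matroid (rho : SumSp K n -> nat) : Prop :=
  [/\ forall L, (0 <= rho L <= Rk L)%N,
      forall L L', ssub L L' -> (rho L <= rho L')%N
    & forall L L', (rho (sadd L L') + rho (scap L L') <= rho L + rho L')%N].

(* nullity eta(L) = Rk(L) - rho(L) (exact subtraction by (R1)) *)
Definition nullity (rho : SumSp K n -> nat) (L : SumSp K n) : nat :=
  (Rk L - rho L)%N.
End SumSpOps.

Definition is_min (P : nat -> Prop) (m : nat) : Prop :=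
  P m /\ forall k, P k -> (m <= k)%N.

From HB Require Import structures.
From mathcomp Require Import all_boot all_order all_algebra all_field.
From mathcomp Require Import zify.
From Stdlib Require Import ClassicalEpsilon.

Set Implicit Arguments.
Unset Strict Implicit.
Unset Printing Implicit Defensive.

(* Take L of least rank with nullity at least i.  If its nullity exceeded i,
   dropping one dimension from a nonzero component of L would lower the rank
   by one and, since rho is monotone, the nullity by at most one, giving a
   space of smaller rank still of nullity at least i. *)

Lemma exists_is_min (P : nat -> Prop) k : P k -> exists m, is_min P m.
Proof.
move=> Pk; pose decP r := sumboolP (excluded_middle_informative (P r)).
have exP : exists r, excluded_middle_informative (P r) by exists k; apply/decP.
by case: (ex_minnP exP) => m /decP Pm minP; exists m; split => // r /decP/minP.
Qed.

Lemma is_min_sub (P Q : nat -> Prop) m :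
  is_min Q m -> P m -> (forall r, P r -> Q r) -> is_min P m.
Proof. by case=> _ minQ Pm PQ; split=> // r /PQ/minQ. Qed.

Section Hyperplane.
Variables (F : fieldType) (vT : vectType F).

Definition hyperv (U : {vspace vT}) : {vspace vT} := <<behead (vbasis U)>>%VS.

Lemma hyperv_sub U : (hyperv U <= U)%VS.
Proof.
rewrite -{2}(span_basis (vbasisP U)); apply: sub_span.
by case: (tval (vbasis U)) => //= x s y ys; rewrite inE ys orbT.
Qed.

Lemma dim_hyperv U : \dim (hyperv U) = (\dim U).-1.
Proof.
have := basis_free (vbasisP U).
rewrite /hyperv -[in RHS](size_tuple (vbasis U)).
case: (tval (vbasis U)) => [|x s] /=; first by rewrite span_nil dimv0.
by rewrite free_cons => /andP[_ /eqP].
Qed.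

End Hyperplane.

Section SumSpaces.
Variables (l : nat) (K : 'I_l -> finFieldType) (n : 'I_l -> nat).
Implicit Types L : SumSp K n.

Definition shyper (j : 'I_l) L : SumSp K n :=
  fun k => if k == j then hyperv (L k) else L k.

Lemma shyper_sub j L : ssub (shyper j L) L.
Proof. by move=> k; rewrite /shyper; case: (k == j) => //; apply: hyperv_sub. Qed.

Lemma Rk_shyper j L : (0 < \dim (L j))%N -> Rk (shyper j L) = (Rk L).-1.
Proof.
move=> dimLj; rewrite /Rk (bigD1 j) //= [in RHS](bigD1 j) //= /shyper eqxx.
rewrite dim_hyperv (eq_bigr (fun k => \dim (L k))) => [|k /negbTE -> //].
by case: (\dim (L j)) dimLj.
Qed.

Lemma Rk_gt0_dim L : (0 < Rk L)%N -> exists j, (0 < \dim (L j))%N.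
Proof.
move=> RkL; apply/existsP; move: RkL; apply: contraLR => /existsPn dimL0.
rewrite -leqNgt leqn0 /Rk sum_nat_eq0; apply/forallP => k /=.
by rewrite -leqn0 leqNgt dimL0.
Qed.

Lemma exists_ssub_Rk_pred L :
  (0 < Rk L)%N -> exists2 L', ssub L' L & Rk L' = (Rk L).-1.
Proof.
case/Rk_gt0_dim=> j dimLj.
by exists (shyper j L); [apply: shyper_sub | apply: Rk_shyper].
Qed.

Section Nullity.
Variable rho : SumSp K n -> nat.
Hypotheses (rho_le_Rk : forall L, (rho L <= Rk L)%N)
           (rho_mono : forall L L', ssub L L' -> (rho L <= rho L')%N).

Lemma nullity_ssub_le L L' :
  ssub L' L -> (nullity rho L <= nullity rho L' + (Rk L - Rk L'))%N.
Proof. by move=> /rho_mono; have := rho_le_Rk L'; rewrite /nullity; lia. Qed.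

Lemma nullity_eq_of_Rk_min i L :
  (i <= nullity rho L)%N ->
  (forall L', (i <= nullity rho L')%N -> (Rk L <= Rk L')%N) ->
  nullity rho L = i.
Proof.
move=> iL minL; apply/eqP; rewrite eqn_leq iL andbT leqNgt; apply/negP => Li.
have RkL : (0 < Rk L)%N by move: Li; rewrite /nullity; lia.
have [L' subL' RkL'] := exists_ssub_Rk_pred RkL.
have := nullity_ssub_le subL'; rewrite RkL' => nullL'.
by have := minL L'; rewrite RkL'; lia.
Qed.

End Nullity.
End SumSpaces.

Theorem mainTheorem7 (l : nat) (K : 'I_l -> finFieldType) (n : 'I_l -> nat)
  (hl : (0 < l)%N) (hn : forall j, (0 < n j)%N)
  (rho : SumSp K n -> nat) (hM : is_sum_matroid rho) (i : nat)
  (hi1 : (1 <= i)%N) (hi2 : (i <= nullity rho (sfull K n))%N) :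
  exists m : nat,
    is_min (fun r => exists L : SumSp K n, nullity rho L = i /\ Rk L = r) m /\
    is_min (fun r => exists L : SumSp K n, (i <= nullity rho L)%N /\ Rk L = r) m.
Proof.
case: hM => rho_bounds rho_mono _.
have rho_le_Rk L : (rho L <= Rk L)%N by case/andP: (rho_bounds L).
have [m minm] := exists_is_min
  (P := fun r => exists L : SumSp K n, (i <= nullity rho L)%N /\ Rk L = r)
  (ex_intro _ (sfull K n) (conj hi2 erefl)).
have [[L [iL RkL]] minL] := minm.
have nullL : nullity rho L = i.
  by apply: (nullity_eq_of_Rk_min rho_le_Rk rho_mono iL) => L' iL'; rewrite RkL;
     apply: minL; exists L'.
exists m; split => //; apply: is_min_sub minm _ _; first by exists L.
by move=> r [L' [nullL' RkL']]; exists L'; rewrite nullL'; split.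
Qed.
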